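(* Let $\mathfrak{S}=(\mathcal{X},\mathsf{S},\gamma,(\Lambda_{a})_{a\in\mathcal{A}})$ be a spectral decomposition system for the Euclidean space $\mathfrak{H}$, let $\mathcal{D}$ be a nonempty subset of $\mathfrak{H}$, and set \[\mathcal{K}=\Big\{\sum_{i=1}^m\alpha_iX_i : m\geq 1,\ (X_i)_{1\leq i\leq m}\in\mathcal{D}^m,\ (\alpha_i)_{1\leq i\leq m}\in[0,+\infty)^m\Big\}.\] Then the following are equivalent: (i) $\langle X,Y\rangle=\langle\gamma(X),\gamma(Y)\rangle$ for all $X,Y\in\mathcal{D}$; (ii) $\|X-Y\|=\|\gamma(X)-\gamma(Y)\|$ for all $X,Y\in\mathcal{D}$; (iii) there exists $a\in\mathcal{A}$ such that $X=\Lambda_a\gamma(X)$ for all $X\in\mathcal{D}$; (iv) there exists $a\in\mathcal{A}$ such that $X=\Lambda_a\gamma(X)$ for all $X\in\mathcal{K}$. Moreover, if one of (i)–(iv) holds, then for every $m\geq 1$, every $(X_i)_{1\leq i\leq m}\in\mathcal{D}^m$ and every $(\alpha_i)_{1\leq i\leq m}\in[0,+\infty)^m$, $\gamma\big(\sum_{i=1}^m\alpha_iX_i\big)=\sum_{i=1}^m\alpha_i\gamma(X_i)$.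
   Context: A Euclidean space is a finite-dimensional real inner product space; inner products are written $\langle\cdot,\cdot\rangle$ and norms $\|\cdot\|$. Let $\mathfrak{H}$ and $\mathcal{X}$ be Euclidean spaces, let $\mathsf{S}$ be a group acting on $\mathcal{X}$ by linear isometries, let $\gamma\colon\mathfrak{H}\to\mathcal{X}$, and let $(\Lambda_a)_{a\in\mathcal{A}}$ be a family of linear operators from $\mathcal{X}$ to $\mathfrak{H}$. The orbit of $x$ is $\mathsf{S}\cdot x=\{s\cdot x: s\in\mathsf{S}\}$; a map $f$ on $\mathcal{X}$ is $\mathsf{S}$-invariant if $f(s\cdot x)=f(x)$ for all $s,x$. The tuple is a spectral decomposition system for $\mathfrak{H}$ if: [A] every $\Lambda_a$ is an isometry; [B] there exists an $\mathsf{S}$-invariant $\tau\colon\mathcal{X}\to\mathcal{X}$ with $\tau(x)\in\mathsf{S}\cdot x$ for all $x$ and $\gamma\circ\Lambda_a=\tau$ for all $a$; [C] for every $X\in\mathfrak{H}$ there is $a$ with $X=\Lambda_a\gamma(X)$; [D] $\langle X,Y\rangle\leq\langle\gamma(X),\gamma(Y)\rangle$ for all $X,Y\in\mathfrak{H}$. *)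

From HB Require Import structures.
From mathcomp Require Import all_boot all_order all_algebra.
From mathcomp Require Import reals.
Set Implicit Arguments. Unset Strict Implicit. Unset Printing Implicit Defensive.
Import Order.TTheory GRing.Theory Num.Theory.
Local Open Scope ring_scope.

Section Defs.
Variable R : realType.

(* A Euclidean space: a finite-dimensional real vector space V (vectType R)
   together with an inner product ip. *)
Definition is_inner_product (V : vectType R) (ip : V -> V -> R) : Prop :=
  [/\ forall (a : R) (x y z : V), ip (a *: x + y) z = a * ip x z + ip y z,
      forall x y : V, ip x y = ip y x
    & forall x : V, x != 0 -> 0 < ip x x].

Definition ipnorm (V : vectType R) (ip : V -> V -> R) (x : V) : R :=
  Num.sqrt (ip x x).

Definition lin_isometry (U V : vectType R) (ipU : U -> U -> R)
    (ipV : V -> V -> R) (f : U -> V) : Prop :=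
  linear f /\ forall x : U, ipnorm ipV (f x) = ipnorm ipU x.

Definition isometric_action (G : groupType) (X : vectType R)
    (ipX : X -> X -> R) (act : G -> X -> X) : Prop :=
  [/\ forall x, act 1%g x = x,
      forall (g h : G) x, act (g * h)%g x = act g (act h x)
    & forall g, lin_isometry ipX ipX (act g)].

Definition in_orbit (G : groupType) (X : vectType R) (act : G -> X -> X)
    (x y : X) : Prop := exists s : G, y = act s x.

(* (X, S, gamma, (Lam a)_{a in A}) is a spectral decomposition system for H,
   where S (= G) acts on X by linear isometries and each Lam a : X -> H is linear. *)
Definition spectral_decomposition_system (H X : vectType R)
    (ipH : H -> H -> R) (ipX : X -> X -> R) (G : groupType)
    (act : G -> X -> X) (gamma : H -> X) (A : Type) (Lam : A -> X -> H) : Prop :=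
  [/\ (* [A] *) forall a, lin_isometry ipX ipH (Lam a),
      (* [B] *) exists tau : X -> X,
          [/\ forall s x, tau (act s x) = tau x,
              forall x, in_orbit act x (tau x)
            & forall a x, gamma (Lam a x) = tau x],
      (* [C] *) forall Y : H, exists a, Y = Lam a (gamma Y)
    & (* [D] *) forall Y Z : H, ipH Y Z <= ipX (gamma Y) (gamma Z)].

Definition gen_cone (H : vectType R) (D : H -> Prop) (Y : H) : Prop :=
  exists (m : nat) (Xs : 'I_m -> H) (al : 'I_m -> R),
    [/\ (0 < m)%N, forall i, D (Xs i), forall i, 0 <= al i
      & Y = \sum_(i < m) al i *: Xs i].

End Defs.

(* Everything rests on the equality case of Cauchy-Schwarz: if |x| = |y| and
   <x, y> >= |x|^2 then x = y.  For a finite family (X_i) in D satisfying (i),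
   [C] gives a with Z = Lam a (gamma Z) for Z = sum_i X_i; since Lam a is an
   isometry and [D] bounds <Z, X_j> by <gamma Z, gamma X_j>, this forces
   Lam a (sum_j gamma X_j) = Z.  Each <X_i, Lam a (gamma X_j)> is at most
   <X_i, X_j> (by [D] and gamma o Lam a o gamma = gamma), and both sums over j
   equal <X_i, Z>, so all these inequalities are equalities and
   Lam a (gamma X_i) = X_i.  A finite subfamily of D spanning D then yields
   (iii).  Conversely, under (iii), u = sum_i al_i gamma X_i satisfies
   Lam a u = sum_i al_i X_i =: Y, so |u| = |gamma Y|, and [D] with al_i >= 0 gives
   <gamma Y, u> >= |Y|^2, whence gamma Y = u. *)
From HB Require Import structures.
From mathcomp Require Import all_boot all_order all_algebra.
From mathcomp Require Import reals lra.
From Stdlib Require Import Classical.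
Import Order.TTheory GRing.Theory Num.Theory.
Set Implicit Arguments.
Unset Strict Implicit.
Unset Printing Implicit Defensive.
Local Open Scope ring_scope.

Section InnerProduct.
Variables (R : realType) (V : vectType R) (ip : V -> V -> R).
Hypothesis ip_inner : is_inner_product ip.

Lemma ipC x y : ip x y = ip y x.
Proof. by case: ip_inner. Qed.

Lemma ip0l z : ip 0 z = 0.
Proof.
case: ip_inner => /(_ 1 0 0 z); rewrite scaler0 addr0 mul1r => ip00 _ _; lra.
Qed.

Lemma ipDl x y z : ip (x + y) z = ip x z + ip y z.
Proof. by case: ip_inner => /(_ 1 x y z); rewrite scale1r mul1r. Qed.

Lemma ipZl a x z : ip (a *: x) z = a * ip x z.
Proof. by case: ip_inner => /(_ a x 0 z); rewrite addr0 ip0l addr0. Qed.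

Lemma ipBl x y z : ip (x - y) z = ip x z - ip y z.
Proof. by rewrite ipDl -scaleN1r ipZl mulN1r. Qed.

Lemma ipDr x y z : ip z (x + y) = ip z x + ip z y.
Proof. by rewrite ipC ipDl !(ipC z). Qed.

Lemma ipZr a x z : ip z (a *: x) = a * ip z x.
Proof. by rewrite ipC ipZl ipC. Qed.

Lemma ipBr x y z : ip z (x - y) = ip z x - ip z y.
Proof. by rewrite ipC ipBl !(ipC z). Qed.

Lemma ip_suml I (r : seq I) (P : pred I) (F : I -> V) z :
  ip (\sum_(i <- r | P i) F i) z = \sum_(i <- r | P i) ip (F i) z.
Proof. exact: (big_morph (ip^~ z) (fun x y => ipDl x y z) (ip0l z)). Qed.

Lemma ip_sumr I (r : seq I) (P : pred I) (F : I -> V) z :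
  ip z (\sum_(i <- r | P i) F i) = \sum_(i <- r | P i) ip z (F i).
Proof. by rewrite ipC ip_suml; apply: eq_bigr => i _; rewrite ipC. Qed.

Lemma ip_ge0 x : 0 <= ip x x.
Proof.
have [->|/negP x_neq0] := eqVneq x 0; first by rewrite ip0l.
by case: ip_inner => _ _ /(_ x) ip_gt0; apply/ltW/ip_gt0/negP.
Qed.

Lemma ip_sqrB x y : ip (x - y) (x - y) = ip x x + ip y y - 2 * ip x y.
Proof. rewrite ipBl !ipBr (ipC y x); lra. Qed.

Lemma ip_ge_sqnorm_eq x y : ip y y = ip x x -> ip x x <= ip x y -> x = y.
Proof.
move=> eq_sq le_xy; apply/eqP; rewrite -subr_eq0; apply/negPn/negP => xy_neq0.
case: ip_inner => _ _ /(_ _ xy_neq0); rewrite ip_sqrB; lra.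
Qed.

Lemma ip_span_eq (s : seq V) y z :
  (forall v, v \in s -> ip v y = ip v z) -> forall v, v \in <<s>>%VS -> ip v y = ip v z.
Proof.
move=> eq_s v /(coord_span (X := in_tuple s)) ->; rewrite !ip_suml.
by apply: eq_bigr => i _; rewrite !ipZl eq_s ?mem_nth.
Qed.

End InnerProduct.

Section LinearFunction.
Variables (K : pzRingType) (U V : lmodType K) (f : U -> V).
Hypothesis f_lin : linear f.

Lemma linD x y : f (x + y) = f x + f y.
Proof. by rewrite -[x in LHS]scale1r f_lin scale1r. Qed.

Lemma lin0 : f 0 = 0.
Proof. by apply/(addrI (f 0)); rewrite -linD !addr0. Qed.

Lemma linZ a x : f (a *: x) = a *: f x.
Proof. by rewrite -[a *: x]addr0 f_lin lin0 addr0. Qed.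

Lemma lin_sum I (r : seq I) (P : pred I) (F : I -> U) :
  f (\sum_(i <- r | P i) F i) = \sum_(i <- r | P i) f (F i).
Proof. exact: (big_morph f linD lin0). Qed.

End LinearFunction.

Lemma ipnorm_eq (R : realType) (U V : vectType R) (ipU : U -> U -> R)
    (ipV : V -> V -> R) x y :
  is_inner_product ipU -> is_inner_product ipV ->
  ipnorm ipU x = ipnorm ipV y <-> ipU x x = ipV y y.
Proof.
move=> ipU_inner ipV_inner; rewrite /ipnorm.
by split=> [/eqP|->//]; rewrite eqr_sqrt ?ip_ge0 // => /eqP.
Qed.

Lemma lin_isometry_ip (R : realType) (U V : vectType R) (ipU : U -> U -> R)
    (ipV : V -> V -> R) (f : U -> V) :
  is_inner_product ipU -> is_inner_product ipV -> lin_isometry ipU ipV f ->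
  forall x y, ipV (f x) (f y) = ipU x y.
Proof.
move=> ipU_inner ipV_inner [f_lin f_iso] x y.
have sq z : ipV (f z) (f z) = ipU z z by apply/ipnorm_eq.
have := sq (x + y); rewrite (linD f_lin).
rewrite !ipDl // !ipDr // !sq (ipC ipV_inner (f y)) (ipC ipU_inner y); lra.
Qed.

Lemma exists_spanning_seq (K : fieldType) (V : vectType K) (D : V -> Prop) :
  exists s : seq V, (forall v, v \in s -> D v) /\ forall v, D v -> v \in <<s>>%VS.
Proof.
apply: NNPP => no_spanning.
have large k : exists s : seq V, (forall v, v \in s -> D v) /\ (k <= \dim <<s>>)%N.
  elim: k => [|k [s [sD le_k_s]]]; first by exists [::].
  have [v [Dv s'v]] : exists v, D v /\ v \notin <<s>>%VS.
    apply: NNPP => all_in; apply: no_spanning; exists s; split=> // v Dv.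
    by apply: NNPP => s'v; apply: all_in; exists v; split=> //; apply/negP.
  exists (v :: s); split; first by move=> w; rewrite inE => /predU1P [->|/sD].
  have sub_s : (<<s>> <= <<v :: s>>)%VS by rewrite span_cons addvSr.
  apply: (leq_ltn_trans le_k_s); rewrite (ltn_leqif (dimv_leqif_sup sub_s)).
  by apply: contra s'v => /subvP; apply; rewrite memv_span ?mem_head.
have [s [_]] := large (\dim {:V}).+1.
by rewrite ltnNge dimvS ?subvf.
Qed.

Section SpectralDecompositionSystem.
Variables (R : realType) (H X : vectType R) (ipH : H -> H -> R) (ipX : X -> X -> R).
Variables (G : groupType) (act : G -> X -> X) (gamma : H -> X).
Variables (A : Type) (Lam : A -> X -> H).
Hypotheses (ipH_inner : is_inner_product ipH) (ipX_inner : is_inner_product ipX).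
Hypothesis sds : spectral_decomposition_system ipH ipX act gamma Lam.

Lemma Lam_linear a : linear (Lam a).
Proof. by case: sds => /(_ a) []. Qed.

Lemma Lam_ip a u v : ipH (Lam a u) (Lam a v) = ipX u v.
Proof. by apply: (lin_isometry_ip ipX_inner ipH_inner); case: sds. Qed.

Lemma ip_gamma_sq Y : ipX (gamma Y) (gamma Y) = ipH Y Y.
Proof.
have [a Y_eq] : exists a, Y = Lam a (gamma Y) by case: sds.
by rewrite [in RHS]Y_eq Lam_ip.
Qed.

Lemma ip_le_ip_gamma Y Z : ipH Y Z <= ipX (gamma Y) (gamma Z).
Proof. by case: sds. Qed.

(* Both sides equal [tau (gamma Y)], by [B] and [C]. *)
Lemma gamma_LamK a Y : gamma (Lam a (gamma Y)) = gamma Y.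
Proof.
have [b Y_eq] : exists b, Y = Lam b (gamma Y) by case: sds.
case: sds => _ [tau [_ _ gamma_Lam]] _ _.
by rewrite gamma_Lam {2}Y_eq gamma_Lam.
Qed.

Lemma ip_Lam_gamma_le a W Y : ipH W (Lam a (gamma Y)) <= ipX (gamma W) (gamma Y).
Proof. by rewrite -[X in _ <= ipX _ X](gamma_LamK a) ip_le_ip_gamma. Qed.

Lemma Lam_gamma_eq a Y : ipH Y Y <= ipH Y (Lam a (gamma Y)) -> Y = Lam a (gamma Y).
Proof. by apply: (ip_ge_sqnorm_eq ipH_inner); rewrite Lam_ip ip_gamma_sq. Qed.

Lemma ipnorm_gamma_subE Y Z :
  ipnorm ipH (Y - Z) = ipnorm ipX (gamma Y - gamma Z) <-> ipH Y Z = ipX (gamma Y) (gamma Z).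
Proof.
rewrite ipnorm_eq // !ip_sqrB // !ip_gamma_sq.
by split=> [|->//]; lra.
Qed.

Lemma ip_conic_le_gamma m (Xs : 'I_m -> H) (al : 'I_m -> R) :
  (forall i, 0 <= al i) ->
  ipH (\sum_i al i *: Xs i) (\sum_i al i *: Xs i)
    <= ipX (gamma (\sum_i al i *: Xs i)) (\sum_i al i *: gamma (Xs i)).
Proof.
move=> al_ge0; set Z := \sum_i _; rewrite {1}/Z ip_suml // ip_sumr //; apply: ler_sum => i _.
rewrite ipZl // ipZr // (ipC ipX_inner); exact/ler_wpM2l/ip_le_ip_gamma.
Qed.

Lemma exists_Lam_gamma_family m (Xs : 'I_m -> H) :
  (forall i j, ipH (Xs i) (Xs j) = ipX (gamma (Xs i)) (gamma (Xs j))) ->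
  exists a, forall i, Xs i = Lam a (gamma (Xs i)).
Proof.
move=> ip_eq; set Z := \sum_i Xs i; set u := \sum_i gamma (Xs i).
have [a Z_eq] : exists a, Z = Lam a (gamma Z) by case: sds.
have Z_Lam_u : Z = Lam a u.
  apply: (ip_ge_sqnorm_eq ipH_inner).
    rewrite Lam_ip !ip_suml //; apply: eq_bigr => i _.
    by rewrite !ip_sumr //; apply: eq_bigr => j _; rewrite ip_eq.
  have := ip_conic_le_gamma Xs (fun _ => ler01).
  under eq_bigr do rewrite scale1r.
  under [X in _ <= ipX _ X]eq_bigr do rewrite scale1r.
  by rewrite {3}Z_eq Lam_ip.
exists a => i; apply: Lam_gamma_eq.
have le_ij j : ipH (Xs i) (Lam a (gamma (Xs j))) <= ipH (Xs i) (Xs j).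
  by rewrite ip_eq ip_Lam_gamma_le.
have [_] := leif_sum (P := predT) (fun j _ => leif_eq (le_ij j)).
rewrite -!ip_sumr // -(lin_sum (Lam_linear a)) -/u -Z_Lam_u eqxx.
by move=> /esym/forall_inP/(_ i isT)/eqP <-.
Qed.

Lemma exists_Lam_gamma (D : H -> Prop) :
  (forall Y Z, D Y -> D Z -> ipH Y Z = ipX (gamma Y) (gamma Z)) ->
  exists a, forall Y, D Y -> Y = Lam a (gamma Y).
Proof.
move=> ip_eq; have [s [sD D_span]] := exists_spanning_seq D.
have sD_nth (i : 'I_(size s)) : D s`_i by apply/sD/mem_nth.
have [a s_fixed] := exists_Lam_gamma_family (fun i j => ip_eq _ _ (sD_nth i) (sD_nth j)).
exists a => Y DY; apply: Lam_gamma_eq.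
suff -> : ipH Y (Lam a (gamma Y)) = ipH Y Y by [].
apply: (ip_span_eq ipH_inner) (D_span Y DY) => _ /(nthP 0) [k k_lt <-].
by rewrite {1}(s_fixed (Ordinal k_lt)) Lam_ip ip_eq //; apply/sD/mem_nth.
Qed.

Section FixedFrame.
Variables (D : H -> Prop) (a : A).
Hypothesis D_fixed : forall Y, D Y -> Y = Lam a (gamma Y).

Lemma ip_gamma_fixed Y Z : D Y -> D Z -> ipH Y Z = ipX (gamma Y) (gamma Z).
Proof. by move=> DY DZ; rewrite {1}(D_fixed DY) {1}(D_fixed DZ) Lam_ip. Qed.

Lemma gamma_conic m (Xs : 'I_m -> H) (al : 'I_m -> R) :
  (forall i, D (Xs i)) -> (forall i, 0 <= al i) ->
  gamma (\sum_i al i *: Xs i) = \sum_i al i *: gamma (Xs i).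
Proof.
move=> DXs al_ge0.
have Lam_u : Lam a (\sum_i al i *: gamma (Xs i)) = \sum_i al i *: Xs i.
  rewrite (lin_sum (Lam_linear a)); apply: eq_bigr => i _.
  by rewrite (linZ (Lam_linear a)) -D_fixed.
apply: (ip_ge_sqnorm_eq ipX_inner); first by rewrite -(Lam_ip a) Lam_u ip_gamma_sq.
by rewrite ip_gamma_sq; exact: ip_conic_le_gamma.
Qed.

Lemma gen_cone_fixed Y : gen_cone D Y -> Y = Lam a (gamma Y).
Proof.
move=> [m [Xs [al [_ DXs al_ge0 ->]]]].
rewrite gamma_conic // (lin_sum (Lam_linear a)).
by apply: eq_bigr => i _; rewrite (linZ (Lam_linear a)) -D_fixed.
Qed.

End FixedFrame.

End SpectralDecompositionSystem.

Lemma mem_gen_cone (R : realType) (H : vectType R) (D : H -> Prop) Y :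
  D Y -> gen_cone D Y.
Proof.
by move=> DY; exists 1%N, (fun _ => Y), (fun _ => 1); rewrite big_ord1 scale1r.
Qed.

Theorem proposition3p6 (R : realType) (H X : vectType R)
    (ipH : H -> H -> R) (ipX : X -> X -> R) (G : groupType)
    (act : G -> X -> X) (gamma : H -> X) (A : Type) (Lam : A -> X -> H)
    (D : H -> Prop) :
  is_inner_product ipH -> is_inner_product ipX ->
  isometric_action ipX act ->
  (forall a, linear (Lam a)) ->
  spectral_decomposition_system ipH ipX act gamma Lam ->
  (exists Y, D Y) ->
  let cond_i := forall Y Z, D Y -> D Z -> ipH Y Z = ipX (gamma Y) (gamma Z) in
  let cond_ii := forall Y Z, D Y -> D Z ->
      ipnorm ipH (Y - Z) = ipnorm ipX (gamma Y - gamma Z) in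
  let cond_iii := exists a, forall Y, D Y -> Y = Lam a (gamma Y) in
  let cond_iv := exists a, forall Y, gen_cone D Y -> Y = Lam a (gamma Y) in
  [/\ cond_i <-> cond_ii, cond_i <-> cond_iii, cond_i <-> cond_iv
    & cond_i -> forall (m : nat) (Xs : 'I_m -> H) (al : 'I_m -> R),
        (0 < m)%N -> (forall i, D (Xs i)) -> (forall i, 0 <= al i) ->
        gamma (\sum_(i < m) al i *: Xs i) = \sum_(i < m) al i *: gamma (Xs i)].
Proof.
move=> ipH_inner ipX_inner _ _ sds _ cond_i cond_ii cond_iii cond_iv.
have i_iii : cond_i -> cond_iii := exists_Lam_gamma ipH_inner ipX_inner sds (D := D).
have iii_i : cond_iii -> cond_i.
  by move=> [a D_fixed]; apply: (ip_gamma_fixed ipH_inner ipX_inner sds D_fixed).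
split=> [||| /i_iii [a D_fixed] m Xs al _].
- by split=> ip_eq Y Z DY DZ; apply/(ipnorm_gamma_subE ipH_inner ipX_inner sds)/ip_eq.
- by split.
- split=> [/i_iii [a D_fixed] | [a cone_fixed]].
    by exists a; apply: (gen_cone_fixed ipH_inner ipX_inner sds D_fixed).
  by apply: iii_i; exists a => Y /mem_gen_cone/cone_fixed.
- exact: (gamma_conic ipH_inner ipX_inner sds D_fixed).
Qed.
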